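(* Let $n\ge3$, $1<k<n/2$, $p>\frac{(n+2)k}{n-2k}$, and let $u$ be a regular solution of (1.6). If the limit $B:=\lim_{r\to\infty}u(r)r^{\frac{2k}{p-k}}$ exists and $B>0$, then $$B=A:=\Big(\tfrac1kC_{n-1}^{k-1}\Big)^{\frac{1}{p-k}}\Big(\tfrac{2k}{p-k}\Big)^{\frac{k}{p-k}}\Big(n-\tfrac{2pk}{p-k}\Big)^{\frac{1}{p-k}}.$$
   Context: Problem (1.6) is: given $\rho>0$, find $u$ with $-\tfrac{1}{k}C_{n-1}^{k-1}(r^{n-k}|u'|^{k-1}u')'=r^{n-1}u^{p}$, $u(r)>0$ for all $r>0$, $u'(0)=0$, $u(0)=\rho$, where $C_{n-1}^{k-1}$ is the binomial coefficient. A solution $u$ of (1.6) is regular if $x\mapsto u(|x|)$ belongs to $C^2(\mathbb{R}^n)$. *)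

From Stdlib Require Import Reals Lra Lia.
Open Scope R_scope.

(* Points of R^n are represented as functions nat -> R, of which only the
   coordinates 0..n-1 are used. *)
Fixpoint rsum (n : nat) (f : nat -> R) : R :=
  match n with O => 0 | S m => rsum m f + f m end.

Definition enorm (n : nat) (x : nat -> R) : R :=
  sqrt (rsum n (fun i => (x i) ^ 2)).

Definition shift (i : nat) (x : nat -> R) (t : R) : nat -> R :=
  fun j => if Nat.eqb j i then x j + t else x j.

Definition has_partial (i : nat) (F : (nat -> R) -> R) (x : nat -> R) (l : R) : Prop :=
  derivable_pt_lim (fun t => F (shift i x t)) 0 l.

Definition cont_Rn (n : nat) (G : (nat -> R) -> R) : Prop :=
  forall x eps, 0 < eps -> exists delta, 0 < delta /\
    forall y, enorm n (fun j => y j - x j) < delta -> Rabs (G y - G x) < eps.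

Definition C2_Rn (n : nat) (F : (nat -> R) -> R) : Prop :=
  exists (D1 : nat -> (nat -> R) -> R) (D2 : nat -> nat -> (nat -> R) -> R),
    cont_Rn n F /\
    (forall i x, (i < n)%nat -> has_partial i F x (D1 i x)) /\
    (forall i, (i < n)%nat -> cont_Rn n (D1 i)) /\
    (forall i j x, (i < n)%nat -> (j < n)%nat -> has_partial j (D1 i) x (D2 i j x)) /\
    (forall i j, (i < n)%nat -> (j < n)%nat -> cont_Rn n (D2 i j)).

(* u (defined on [0,oo); values at negative r are irrelevant) solves (1.6):
   -(1/k) C_{n-1}^{k-1} (r^{n-k} |u'|^{k-1} u')' = r^{n-1} u^p on r > 0,
   u > 0 on r > 0, u'(0) = 0 (one-sided derivative), u(0) = rho. *)
Definition solves_1_6 (n k : nat) (p rho : R) (u : R -> R) : Prop :=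
  (forall r, 0 < r -> 0 < u r) /\
  u 0 = rho /\
  (forall eps, 0 < eps -> exists delta, 0 < delta /\
      forall h, 0 < h < delta -> Rabs ((u h - u 0) / h) < eps) /\
  exists u1 : R -> R,
    (forall r, 0 < r -> derivable_pt_lim u r (u1 r)) /\
    (forall r, 0 < r ->
       derivable_pt_lim (fun s => s ^ (n - k) * (Rabs (u1 s)) ^ (k - 1) * u1 s) r
         (- (INR k / C (n - 1) (k - 1)) * (r ^ (n - 1) * Rpower (u r) p))).

Definition regular (n : nat) (u : R -> R) : Prop :=
  C2_Rn n (fun x => u (enorm n x)).

Definition lim_infty (f : R -> R) (l : R) : Prop :=
  forall eps, 0 < eps -> exists M, forall r, M < r -> Rabs (f r - l) < eps.

(* Write a := 2k/(p-k) and e := n - 2pk/(p-k) > 0, so that n = e + a p and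
   n = e + (a+2) k.  The flux w(r) = r^(n-k) |u'|^(k-1) u' satisfies
   w' = -K r^(e-1) (u r^a)^p with K = k / C_(n-1)^(k-1), hence by l'Hopital
   w / r^e -> -K B^p / e.  Thus u' < 0 eventually and (-u' r^(a+1))^k tends to
   K B^p / e.  On the other hand the Cauchy mean value theorem for u and r^(-a)
   on the dyadic intervals [r, 2r] produces points c -> oo where -u'(c) c^(a+1)
   is close to a B.  Comparing gives (a B)^k = K B^p / e, which is solved for B. *)
From Stdlib Require Import Reals Lra Lia.
Open Scope R_scope.

Definition cluster_infty (f : R -> R) (l : R) : Prop :=
  forall eps, 0 < eps -> forall M, exists r, M < r /\ Rabs (f r - l) < eps.

Lemma continuity_pt_eps (h : R -> R) (x eps : R) : continuity_pt h x -> 0 < eps ->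
  exists d, 0 < d /\ forall y, Rabs (y - x) < d -> Rabs (h y - h x) < eps.
Proof.
  intros Hh Heps. destruct (Hh eps Heps) as [d [Hd Hclose]].
  exists d. split; [exact Hd|]. intros y Hy.
  destruct (Req_dec y x) as [->|Hyx].
  - rewrite Rminus_diag, Rabs_R0. exact Heps.
  - apply (Hclose y). split; [split; [exact I | auto] | exact Hy].
Qed.

Lemma lim_infty_comp (f h : R -> R) (l : R) :
  lim_infty f l -> continuity_pt h l -> lim_infty (fun r => h (f r)) (h l).
Proof.
  intros Hf Hh eps Heps.
  destruct (continuity_pt_eps h l eps Hh Heps) as [d [Hd Hclose]].
  destruct (Hf d Hd) as [M HM]. exists M. intros r Hr. apply Hclose, HM, Hr.
Qed.

Lemma cluster_infty_comp (f h : R -> R) (l : R) :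
  cluster_infty f l -> continuity_pt h l -> cluster_infty (fun r => h (f r)) (h l).
Proof.
  intros Hf Hh eps Heps M.
  destruct (continuity_pt_eps h l eps Hh Heps) as [d [Hd Hclose]].
  destruct (Hf d Hd M) as [r [Hr Hfr]]. exists r. split; [exact Hr | apply Hclose, Hfr].
Qed.

Lemma lim_infty_ext_eventually (f g : R -> R) (l : R) :
  (exists R0, forall r, R0 < r -> f r = g r) -> lim_infty f l -> lim_infty g l.
Proof.
  intros [R0 Hfg] Hf eps Heps. destruct (Hf eps Heps) as [M HM].
  exists (Rmax M R0). intros r Hr.
  pose proof (Rmax_l M R0). pose proof (Rmax_r M R0).
  rewrite <- Hfg by lra. apply HM. lra.
Qed.

Lemma lim_infty_cluster_infty_eq (f : R -> R) (l m : R) :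
  lim_infty f l -> cluster_infty f m -> l = m.
Proof.
  intros Hl Hm. apply cond_eq. intros eps Heps.
  destruct (Hl (eps / 2)) as [M HM]; [lra|].
  destruct (Hm (eps / 2) ltac:(lra) M) as [r [Hr Hfr]].
  specialize (HM r Hr).
  replace (l - m) with ((f r - m) - (f r - l)) by ring.
  eapply Rle_lt_trans; [apply Rabs_triang|]. rewrite Rabs_Ropp. lra.
Qed.

Lemma lim_infty_neg_eventually (f : R -> R) (l : R) :
  lim_infty f l -> l < 0 -> exists R0, forall r, R0 < r -> f r < 0.
Proof.
  intros Hf Hl. destruct (Hf (- l)) as [M HM]; [lra|].
  exists M. intros r Hr. specialize (HM r Hr). apply Rabs_def2 in HM. lra.
Qed.

Lemma Rpower_unbounded (b T : R) : 0 < b ->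
  exists R0, 0 < R0 /\ forall r, R0 < r -> T < Rpower r b.
Proof.
  intros Hb. pose proof (Rmax_l T 1). pose proof (Rmax_r T 1).
  exists (Rpower (Rmax T 1) (/ b)). split; [apply exp_pos|].
  intros r Hr.
  assert (Hroot : Rpower (Rpower (Rmax T 1) (/ b)) b = Rmax T 1).
  { rewrite Rpower_mult, Rinv_l by lra. apply Rpower_1. lra. }
  assert (Rpower (Rpower (Rmax T 1) (/ b)) b < Rpower r b)
    by (apply Rlt_Rpower_l; [exact Hb | split; [apply exp_pos | exact Hr]]).
  lra.
Qed.

Lemma cauchy_mvt (f g f' g' : R -> R) (a b : R) : a < b ->
  (forall c, a <= c <= b -> derivable_pt_lim f c (f' c)) ->
  (forall c, a <= c <= b -> derivable_pt_lim g c (g' c)) ->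
  exists c, a < c < b /\ (g b - g a) * f' c = (f b - f a) * g' c.
Proof.
  intros Hab Hf Hg.
  destruct (MVT_cor2 (fun x => (g b - g a) * f x - (f b - f a) * g x)
     (fun x => (g b - g a) * f' x - (f b - f a) * g' x) a b Hab) as [c [Hc Hmvt]].
  - intros c Hc.
    apply (derivable_pt_lim_minus (mult_real_fct (g b - g a) f)
                                  (mult_real_fct (f b - f a) g));
      apply derivable_pt_lim_scal; auto.
  - exists c. split; [exact Hmvt|].
    assert (Hzero : ((g b - g a) * f' c - (f b - f a) * g' c) * (b - a) = 0) by lra.
    apply Rmult_integral in Hzero. destruct Hzero; lra.
Qed.

Lemma Rabs_sub_le_Rpower (f f' : R -> R) (b e r0 r : R) : 0 < b -> 0 < r0 < r ->
  (forall c, r0 <= c <= r -> derivable_pt_lim f c (f' c)) ->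
  (forall c, r0 < c < r -> Rabs (f' c) <= e * (b * Rpower c (b - 1))) ->
  Rabs (f r - f r0) <= e * (Rpower r b - Rpower r0 b).
Proof.
  intros Hb Hr Hf Hbound.
  destruct (cauchy_mvt f (fun x => Rpower x b) f' (fun x => b * Rpower x (b - 1)) r0 r)
    as [c [Hc Hmvt]];
    [lra | exact Hf | intros c Hc; apply derivable_pt_lim_power; lra |].
  assert (Hgc : 0 < b * Rpower c (b - 1)) by (apply Rmult_lt_0_compat; [lra | apply exp_pos]).
  assert (Hgr : Rpower r0 b < Rpower r b) by (apply Rlt_Rpower_l; lra).
  apply (Rmult_le_reg_r (b * Rpower c (b - 1)) _ _ Hgc).
  replace (Rabs (f r - f r0) * (b * Rpower c (b - 1)))
    with (Rabs ((f r - f r0) * (b * Rpower c (b - 1))))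
    by (rewrite Rabs_mult, (Rabs_right (b * Rpower c (b - 1))) by lra; reflexivity).
  rewrite <- Hmvt, Rabs_mult, (Rabs_right (Rpower r b - Rpower r0 b)) by lra.
  specialize (Hbound c Hc). nra.
Qed.

Lemma lim_infty_div_Rpower_0 (f f' : R -> R) (b : R) : 0 < b ->
  (forall r, 0 < r -> derivable_pt_lim f r (f' r)) ->
  lim_infty (fun r => f' r / Rpower r (b - 1)) 0 ->
  lim_infty (fun r => f r / Rpower r b) 0.
Proof.
  intros Hb Hf Hlim eps Heps.
  destruct (Hlim (eps / 2 * b)) as [R1 HR1]; [apply Rmult_lt_0_compat; lra|].
  set (r0 := Rmax R1 1 + 1).
  assert (Hr0 : R1 < r0 /\ 1 < r0)
    by (unfold r0; pose proof (Rmax_l R1 1); pose proof (Rmax_r R1 1); lra).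
  destruct (Rpower_unbounded b (2 * Rabs (f r0) / eps) Hb) as [R2 [_ HR2]].
  exists (Rmax r0 R2). intros r Hr.
  pose proof (Rmax_l r0 R2). pose proof (Rmax_r r0 R2).
  assert (Hgr : 0 < Rpower r b) by apply exp_pos.
  assert (Hgr0 : 0 < Rpower r0 b) by apply exp_pos.
  assert (Hincr : Rabs (f r - f r0) <= eps / 2 * (Rpower r b - Rpower r0 b)).
  { apply (Rabs_sub_le_Rpower f f'); [lra | lra | intros c Hc; apply Hf; lra |].
    intros c Hc. assert (Hgc : 0 < Rpower c (b - 1)) by apply exp_pos.
    specialize (HR1 c ltac:(lra)). rewrite Rminus_0_r in HR1. unfold Rdiv in HR1.
    rewrite Rabs_mult, Rabs_inv, (Rabs_right (Rpower c (b - 1))) in HR1 by lra.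
    apply (Rmult_lt_compat_r (Rpower c (b - 1))) in HR1; [|lra].
    rewrite Rmult_assoc, Rinv_l, Rmult_1_r in HR1 by lra. lra. }
  assert (Hfr0 : 2 * Rabs (f r0) < eps * Rpower r b).
  { specialize (HR2 r ltac:(lra)). apply (Rmult_lt_compat_r eps) in HR2; [|lra].
    unfold Rdiv in HR2. rewrite Rmult_assoc, Rinv_l, Rmult_1_r in HR2 by lra. lra. }
  assert (Hfr : Rabs (f r) <= Rabs (f r - f r0) + Rabs (f r0)).
  { replace (f r) with ((f r - f r0) + f r0) at 1 by ring. apply Rabs_triang. }
  rewrite Rminus_0_r. unfold Rdiv.
  rewrite Rabs_mult, Rabs_inv, (Rabs_right (Rpower r b)) by lra.
  apply (Rmult_lt_reg_r (Rpower r b)); [lra|].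
  rewrite Rmult_assoc, Rinv_l, Rmult_1_r by lra. nra.
Qed.

Lemma lim_infty_div_Rpower (f f' : R -> R) (b M : R) : 0 < b ->
  (forall r, 0 < r -> derivable_pt_lim f r (f' r)) ->
  lim_infty (fun r => f' r / Rpower r (b - 1)) M ->
  lim_infty (fun r => f r / Rpower r b) (M / b).
Proof.
  intros Hb Hf Hlim.
  set (h := fun r => f r - M / b * Rpower r b).
  assert (Hh : lim_infty (fun r => h r / Rpower r b) 0).
  { apply (lim_infty_div_Rpower_0 h (fun r => f' r - M / b * (b * Rpower r (b - 1)))).
    - exact Hb.
    - intros r Hr.
      apply (derivable_pt_lim_minus f (mult_real_fct (M / b) (fun x => Rpower x b))).
      + apply Hf, Hr.
      + apply derivable_pt_lim_scal, derivable_pt_lim_power, Hr.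
    - apply (lim_infty_ext_eventually (fun r => f' r / Rpower r (b - 1) - M)).
      + exists 0. intros r _. pose proof (exp_pos ((b - 1) * ln r)).
        unfold Rpower. field. lra.
      + pose proof (lim_infty_comp _ (fun x => x - M) M Hlim ltac:(reg)) as Hshift.
        cbv beta in Hshift. rewrite Rminus_diag in Hshift. exact Hshift. }
  apply (lim_infty_ext_eventually (fun r => h r / Rpower r b + M / b)).
  - exists 0. intros r _. pose proof (exp_pos (b * ln r)).
    unfold h, Rpower. field. lra.
  - pose proof (lim_infty_comp _ (fun x => x + M / b) 0 Hh ltac:(reg)) as Hshift.
    cbv beta in Hshift. rewrite Rplus_0_l in Hshift. exact Hshift.
Qed.

Lemma mvt_dilation (u u1 : R -> R) (a r : R) : 0 < a -> 0 < r ->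
  (forall c, 0 < c -> derivable_pt_lim u c (u1 c)) ->
  exists c, r < c < 2 * r /\
    - u1 c * Rpower c (a + 1) * (1 - Rpower 2 (- a)) =
    a * (u r * Rpower r a - Rpower 2 (- a) * (u (2 * r) * Rpower (2 * r) a)).
Proof.
  intros Ha Hr Hu.
  destruct (cauchy_mvt u (fun x => Rpower x (- a)) u1 (fun x => - a * Rpower x (- a - 1))
              r (2 * r)) as [c [Hc Hmvt]];
    [lra | intros c Hc; apply Hu; lra | intros c Hc; apply derivable_pt_lim_power; lra |].
  exists c. split; [exact Hc|].
  assert (Hinv : forall x, 0 < x -> Rpower x a * Rpower x (- a) = 1).
  { intros x Hx. rewrite <- Rpower_plus, Rplus_opp_r. apply Rpower_O, Hx. }
  assert (Hc1 : Rpower c (- a - 1) * Rpower c (a + 1) = 1).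
  { rewrite <- Rpower_plus. replace (- a - 1 + (a + 1)) with 0 by ring. apply Rpower_O. lra. }
  assert (Hdil : Rpower (2 * r) (- a) = Rpower 2 (- a) * Rpower r (- a))
    by (symmetry; apply Rpower_mult_distr; lra).
  assert (Hr1 := Hinv r Hr). assert (H2r1 := Hinv (2 * r) ltac:(lra)).
  rewrite Hdil in Hmvt, H2r1.
  apply (Rmult_eq_reg_r (Rpower r (- a))); [| apply Rgt_not_eq, exp_pos].
  transitivity ((Rpower 2 (- a) * Rpower r (- a) - Rpower r (- a)) * u1 c
                  * Rpower c (a + 1)); [ring|].
  rewrite Hmvt.
  transitivity (a * (Rpower c (- a - 1) * Rpower c (a + 1))
                  * (u r - u (2 * r))); [ring|].
  rewrite Hc1.
  replace (u r - u (2 * r)) with (u r * (Rpower r a * Rpower r (- a))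
      - u (2 * r) * (Rpower (2 * r) a * (Rpower 2 (- a) * Rpower r (- a))))
    by (rewrite Hr1, H2r1; ring).
  ring.
Qed.

(* The dyadic mean values pin down the derivative only along a sequence, not
   as a limit: hence a cluster point. *)
Lemma cluster_scaled_derivative (u u1 : R -> R) (a B : R) : 0 < a ->
  (forall r, 0 < r -> derivable_pt_lim u r (u1 r)) ->
  lim_infty (fun r => u r * Rpower r a) B ->
  cluster_infty (fun r => - u1 r * Rpower r (a + 1)) (a * B).
Proof.
  intros Ha Hu Hlim eps Heps M.
  set (t := Rpower 2 (- a)).
  assert (Ht : 0 < t < 1).
  { split; [apply exp_pos|]. unfold t. rewrite <- (Rpower_O 2) by lra.
    apply Rpower_lt; lra. }
  set (d := eps * (1 - t) / (a * (1 + t))).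
  assert (Hd : 0 < d) by (unfold d; apply Rdiv_lt_0_compat; nra).
  destruct (Hlim d Hd) as [R0 HR0].
  set (r := Rmax (Rmax R0 M) 1 + 1).
  assert (Hr : R0 < r /\ M < r /\ 1 <= r).
  { unfold r. pose proof (Rmax_l (Rmax R0 M) 1). pose proof (Rmax_r (Rmax R0 M) 1).
    pose proof (Rmax_l R0 M). pose proof (Rmax_r R0 M). repeat split; lra. }
  destruct (mvt_dilation u u1 a r Ha ltac:(lra) Hu) as [c [Hc Hdil]].
  fold t in Hdil.
  set (v := fun x => u x * Rpower x a) in *.
  exists c. split; [lra|].
  assert (Hv1 := HR0 r ltac:(lra)). assert (Hv2 := HR0 (2 * r) ltac:(lra)).
  cbv beta in Hv1, Hv2.
  assert (Hy : - u1 c * Rpower c (a + 1) - a * B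
               = a * ((v r - B) - t * (v (2 * r) - B)) / (1 - t)).
  { apply (Rmult_eq_reg_r (1 - t)); [|lra].
    rewrite Rmult_minus_distr_r, Hdil. unfold v. field. lra. }
  rewrite Hy.
  assert (Hnum : Rabs ((v r - B) - t * (v (2 * r) - B)) < d * (1 + t)).
  { unfold Rminus at 1. eapply Rle_lt_trans; [apply Rabs_triang|].
    rewrite Rabs_Ropp, Rabs_mult, (Rabs_right t) by lra. unfold v. nra. }
  unfold Rdiv.
  rewrite Rabs_mult, Rabs_mult, (Rabs_right a), Rabs_inv, (Rabs_right (1 - t)) by lra.
  apply Rlt_le_trans with (a * (d * (1 + t)) * / (1 - t)).
  - apply Rmult_lt_compat_r; [apply Rinv_0_lt_compat; lra|].
    apply Rmult_lt_compat_l; assumption.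
  - right. unfold d. field. lra.
Qed.

Section Flux.

Variables (n k : nat) (p a e K B : R) (u u1 : R -> R).
Hypotheses (Hk : (1 <= k)%nat) (Hkn : (k <= n)%nat).
Hypotheses (He : 0 < e) (HK : 0 < K) (HB : 0 < B).
Hypotheses (Hn_ap : INR n = e + a * p) (Hn_ak : INR n = e + (a + 2) * INR k).
Hypothesis Hu_pos : forall r, 0 < r -> 0 < u r.
Hypothesis Hflux : forall r, 0 < r ->
  derivable_pt_lim (fun s => s ^ (n - k) * Rabs (u1 s) ^ (k - 1) * u1 s) r
    (- K * (r ^ (n - 1) * Rpower (u r) p)).
Hypothesis Hlim : lim_infty (fun r => u r * Rpower r a) B.

Let flux (s : R) : R := s ^ (n - k) * Rabs (u1 s) ^ (k - 1) * u1 s.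

Lemma flux_limit : lim_infty (fun r => flux r / Rpower r e) (- K * Rpower B p / e).
Proof.
  apply (lim_infty_div_Rpower flux (fun r => - K * (r ^ (n - 1) * Rpower (u r) p)));
    [exact He | exact Hflux |].
  apply (lim_infty_ext_eventually (fun r => - K * Rpower (u r * Rpower r a) p)).
  - exists 0. intros r Hr.
    assert (Hur := Hu_pos r Hr).
    assert (Hsplit : r ^ (n - 1) = Rpower r (e - 1) * Rpower r (a * p)).
    { rewrite <- Rpower_plus, <- Rpower_pow by lra. f_equal.
      rewrite minus_INR by lia. simpl INR. lra. }
    rewrite <- Rpower_mult_distr, Rpower_mult, Hsplit by (try apply exp_pos; lra).
    assert (0 < Rpower r (e - 1)) by apply exp_pos. field. lra.
  - apply (lim_infty_comp _ (fun x => - K * Rpower x p)); [exact Hlim|].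
    apply derivable_continuous_pt. exists (- K * (p * Rpower B (p - 1))).
    apply (derivable_pt_lim_scal (fun x => Rpower x p)), derivable_pt_lim_power, HB.
Qed.

Lemma scaled_derivative_pow_limit :
  lim_infty (fun r => (- u1 r * Rpower r (a + 1)) ^ k) (K * Rpower B p / e).
Proof.
  assert (Hneg : - K * Rpower B p / e < 0).
  { unfold Rdiv. rewrite Ropp_mult_distr_l_reverse, Ropp_mult_distr_l_reverse.
    apply Ropp_lt_gt_0_contravar, Rmult_lt_0_compat;
      [apply Rmult_lt_0_compat; [exact HK | apply exp_pos] | apply Rinv_0_lt_compat, He]. }
  destruct (lim_infty_neg_eventually _ _ flux_limit Hneg) as [R1 HR1].
  apply (lim_infty_ext_eventually (fun r => - (flux r / Rpower r e))).
  - exists (Rmax R1 0). intros r Hr.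
    pose proof (Rmax_l R1 0). pose proof (Rmax_r R1 0).
    assert (Hge : 0 < Rpower r e) by apply exp_pos.
    assert (Hflux_neg : flux r < 0).
    { specialize (HR1 r ltac:(lra)).
      replace (flux r) with (flux r / Rpower r e * Rpower r e) by (field; lra). nra. }
    assert (Hu1 : u1 r < 0).
    { destruct (Rlt_or_le (u1 r) 0) as [|Hu1]; [assumption|]. exfalso.
      assert (0 <= r ^ (n - k) * Rabs (u1 r) ^ (k - 1))
        by (apply Rmult_le_pos; apply pow_le; [lra | apply Rabs_pos]).
      unfold flux in Hflux_neg. nra. }
    set (m := - u1 r).
    assert (Hpow : r ^ (n - k) = Rpower r e * Rpower r (a + 1) ^ k).
    { rewrite <- !Rpower_pow, Rpower_mult, <- Rpower_plus by (try apply exp_pos; lra).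
      f_equal. rewrite minus_INR by lia. lra. }
    assert (Hm : m ^ (k - 1) * m = m ^ k)
      by (rewrite Rmult_comm, tech_pow_Rmult; f_equal; lia).
    unfold flux. rewrite Rabs_left, Hpow by assumption. fold m.
    replace (u1 r) with (- m) by (unfold m; ring).
    rewrite Rpow_mult_distr, <- Hm. field. lra.
  - pose proof (lim_infty_comp _ Ropp _ flux_limit ltac:(reg)) as Hopp.
    replace (K * Rpower B p / e) with (- (- K * Rpower B p / e)) by (field; lra).
    exact Hopp.
Qed.

End Flux.

Lemma Rpower_fixed_point (x a c d q : R) (k : nat) :
  0 < x -> 0 < a -> 0 < c -> 0 < d -> 0 < q ->
  (a * x) ^ k = Rpower x (q + INR k) / (c * d) ->
  x = Rpower c (1 / q) * Rpower a (INR k / q) * Rpower d (1 / q).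
Proof.
  intros Hx Ha Hc Hd Hq Heq.
  assert (Hxk : 0 < x ^ k) by (apply pow_lt, Hx).
  assert (Hak : 0 < a ^ k) by (apply pow_lt, Ha).
  assert (Hxq : Rpower x q = c * a ^ k * d).
  { rewrite Rpower_plus, Rpower_pow, Rpow_mult_distr in Heq by exact Hx.
    apply (Rmult_eq_reg_r (x ^ k)); [| lra].
    transitivity (a ^ k * x ^ k * (c * d)); [rewrite Heq; field; nra | ring]. }
  replace (INR k / q) with (INR k * (1 / q)) by (field; lra).
  rewrite <- Rpower_mult, Rpower_pow by exact Ha.
  rewrite !Rpower_mult_distr, <- Hxq, Rpower_mult by (try apply Rmult_lt_0_compat; lra).
  replace (q * (1 / q)) with 1 by (field; lra). rewrite Rpower_1 by exact Hx. reflexivity.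
Qed.

Lemma C_pos (m j : nat) : 0 < C m j.
Proof.
  unfold C. apply Rdiv_lt_0_compat;
    [| apply Rmult_lt_0_compat]; apply lt_0_INR, Factorial.lt_O_fact.
Qed.

Lemma supercritical_exponents (n k : nat) (p : R) :
  (1 < k)%nat -> (2 * k < n)%nat ->
  p > (INR n + 2) * INR k / (INR n - 2 * INR k) ->
  INR k < p /\ 0 < INR n - 2 * p * INR k / (p - INR k).
Proof.
  intros Hk Hnk Hp.
  assert (Hk2 : 2 <= INR k) by (apply (le_INR 2); lia).
  assert (Hnk2 : 2 * INR k + 1 <= INR n).
  { replace (2 * INR k + 1) with (INR (2 * k + 1))
      by (rewrite plus_INR, mult_INR; simpl; ring).
    apply le_INR; lia. }
  assert (Hp' : p * (INR n - 2 * INR k) > (INR n + 2) * INR k).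
  { apply (Rmult_gt_compat_r (INR n - 2 * INR k)) in Hp; [|lra].
    unfold Rdiv in Hp. rewrite Rmult_assoc, Rinv_l, Rmult_1_r in Hp; lra. }
  assert (Hpk : INR k < p) by nra.
  split; [exact Hpk|].
  replace (INR n - 2 * p * INR k / (p - INR k))
    with ((p * (INR n - 2 * INR k) - INR n * INR k) / (p - INR k)) by (field; lra).
  apply Rdiv_lt_0_compat; nra.
Qed.

Theorem mainTheorem9 (n k : nat) (p rho : R) (u : R -> R) :
  (3 <= n)%nat -> (1 < k)%nat -> (2 * k < n)%nat ->
  p > (INR n + 2) * INR k / (INR n - 2 * INR k) ->
  0 < rho ->
  solves_1_6 n k p rho u ->
  regular n u ->
  forall B : R,
    lim_infty (fun r => u r * Rpower r (2 * INR k / (p - INR k))) B ->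
    0 < B ->
    B = Rpower (C (n - 1) (k - 1) / INR k) (1 / (p - INR k))
        * Rpower (2 * INR k / (p - INR k)) (INR k / (p - INR k))
        * Rpower (INR n - 2 * p * INR k / (p - INR k)) (1 / (p - INR k)).
Proof.
  intros _ Hk Hnk Hp _ [Hu_pos [_ [_ [u1 [Hu1 Hflux]]]]] _ B Hlim HB.
  destruct (supercritical_exponents n k p Hk Hnk Hp) as [Hpk He].
  assert (Hk2 : 2 <= INR k) by (apply (le_INR 2); lia).
  set (a := 2 * INR k / (p - INR k)) in *.
  set (e := INR n - 2 * p * INR k / (p - INR k)) in *.
  assert (Ha : 0 < a) by (apply Rdiv_lt_0_compat; lra).
  pose proof (C_pos (n - 1) (k - 1)) as HC.
  assert (Hlim_pow := scaled_derivative_pow_limit n k p a e (INR k / C (n - 1) (k - 1)) B u u1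
    ltac:(lia) ltac:(lia) He ltac:(apply Rdiv_lt_0_compat; lra) HB
    ltac:(unfold e, a; field; lra) ltac:(unfold e, a; field; lra) Hu_pos Hflux Hlim).
  assert (Hcluster_pow := cluster_infty_comp _ (fun x => x ^ k) _
    (cluster_scaled_derivative u u1 a B Ha Hu1 Hlim) ltac:(reg)).
  pose proof (lim_infty_cluster_infty_eq _ _ _ Hlim_pow Hcluster_pow) as Heq.
  apply (Rpower_fixed_point B a (C (n - 1) (k - 1) / INR k) e (p - INR k) k); try lra.
  - apply Rdiv_lt_0_compat; lra.
  - rewrite <- Heq. replace (p - INR k + INR k) with p by ring. field. lra.
Qed.
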